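(* Let $\Gamma=(V,E)$ be a simple graph of order $n$ and minimum degree $\delta$, and let $\mu_*$ be the Laplacian spectral radius of $\Gamma$. Then the global offensive alliance number of $\Gamma$ satisfies $$\gamma_{a_o}(\Gamma)\ge \left\lceil\frac{n}{\mu_*}\left\lceil\frac{\delta +1}{2}\right\rceil\right\rceil$$ and the global strong offensive alliance number of $\Gamma$ satisfies $$\gamma_{\hat{a}_o}(\Gamma)\ge \left\lceil\frac{n}{\mu_*}\left(\left\lceil\frac{\delta }{2}\right\rceil+1\right)\right\rceil.$$
   Context: For $S\subseteq V$ and $v\in V$, $N_S(v)=\{u\in S: u\sim v\}$ and $N_{V\setminus S}(v)=\{u\in V\setminus S: u\sim v\}$. A nonempty set $S\subseteq V$ is a global offensive alliance if $|N_S(v)|\ge |N_{V\setminus S}(v)|+1$ for every $v\in V\setminus S$, and a global strong offensive alliance if $|N_S(v)|\ge |N_{V\setminus S}(v)|+2$ for every $v\in V\setminus S$. $\gamma_{a_o}(\Gamma)$ (resp. $\gamma_{\hat a_o}(\Gamma)$) is the minimum cardinality of a global offensive (resp. global strong offensive) alliance. The Laplacian spectral radius is the largest eigenvalue of the Laplacian matrix of $\Gamma$. *)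

From mathcomp Require Import all_boot all_order all_algebra.
From mathcomp Require Import reals.
Set Implicit Arguments. Unset Strict Implicit. Unset Printing Implicit Defensive.
Import Order.TTheory GRing.Theory Num.Theory.

Definition simple_graph (n : nat) (e : rel 'I_n) : Prop :=
  symmetric e /\ irreflexive e.

Definition nbhd_in (n : nat) (e : rel 'I_n) (S : {set 'I_n}) (v : 'I_n) : {set 'I_n} :=
  [set u in S | e u v].

Definition deg (n : nat) (e : rel 'I_n) (v : 'I_n) : nat := #|[set u | e u v]|.

(* minimum degree (the default #|'I_n| is irrelevant for n >= 1 since degrees are < n) *)
Definition min_deg (n : nat) (e : rel 'I_n) : nat :=
  \big[minn/n]_(v : 'I_n) deg e v.

Definition global_offensive_alliance (n : nat) (e : rel 'I_n) (S : {set 'I_n}) : bool :=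
  (S != set0) &&
  [forall v in ~: S, #|nbhd_in e S v| >= #|nbhd_in e (~: S) v| + 1].

Definition global_strong_offensive_alliance (n : nat) (e : rel 'I_n) (S : {set 'I_n}) : bool :=
  (S != set0) &&
  [forall v in ~: S, #|nbhd_in e S v| >= #|nbhd_in e (~: S) v| + 2].

(* minimum cardinality; setT is always an alliance when n >= 1, so the
   default value n never matters in that case *)
Definition goa_number (n : nat) (e : rel 'I_n) : nat :=
  \big[minn/n]_(S : {set 'I_n} | global_offensive_alliance e S) #|S|.

Definition gsoa_number (n : nat) (e : rel 'I_n) : nat :=
  \big[minn/n]_(S : {set 'I_n} | global_strong_offensive_alliance e S) #|S|.

Definition laplacian (R : realType) (n : nat) (e : rel 'I_n) : 'M[R]_n :=
  \matrix_(i, j) (if i == j then (deg e i)%:R else if e i j then -1 else 0)%R.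

Definition lap_spectral_radius (R : realType) (n : nat) (e : rel 'I_n) (mu : R) : Prop :=
  eigenvalue (laplacian R e) mu /\
  (forall a : R, eigenvalue (laplacian R e) a -> (a <= mu)%R).

From mathcomp Require Import all_boot all_order all_algebra.
From mathcomp Require Import reals complex.
From mathcomp Require Import ring lra zify.
Set Implicit Arguments. Unset Strict Implicit. Unset Printing Implicit Defensive.
Import Order.TTheory GRing.Theory Num.Theory.
Local Open Scope ring_scope.

(* For S with s = |S| vertices, the vector equal to n - s on S and to -s off S has
   Laplacian form n^2 e(S, ~S) and squared norm n s (n - s), so the Rayleigh bound
   for the largest Laplacian eigenvalue mu gives n e(S, ~S) <= mu s (n - s).  In a
   (strong) offensive alliance every vertex outside S has at least
   k = ceil((delta + 1) / 2) (resp. ceil(delta / 2) + 1) neighbours in S, hence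
   e(S, ~S) >= k (n - s) and k n <= mu s.  For S = V one uses mu >= delta + 1. *)

Section NormalForm.
Variables (C : numClosedFieldType) (n : nat) (A : 'M[C]_n).
Hypothesis A_normal : A \is normalmx.
Local Open Scope sesquilinear_scope.
Local Notation P := (spectralmx A).
Local Notation d := (spectral_diag A).

Lemma spectral_diag_eigenvalue j : eigenvalue A (d 0 j).
Proof.
have PA : P *m A = diag_mx d *m P.
  rewrite [X in P *m X](orthomx_spectralP A_normal) !mulmxA.
  by rewrite mulmxV ?spectral_unit ?mul1mx.
apply/eigenvalueP; exists (row j P).
  by rewrite -row_mul PA mul_diag_mx; apply/rowP => k; rewrite !mxE.
apply/eqP => Pj0; have := row_unitarymxP (spectral_unitarymx A) j j.
by rewrite Pj0 linear0l eqxx => /eqP; rewrite eq_sym oner_eq0.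
Qed.

Lemma normalmx_form_le (mu : C) (X : 'rV_n) : (forall j, d 0 j <= mu) ->
  (X *m A *m X^t*) 0 0 <= mu * (X *m X^t*) 0 0.
Proof.
move=> d_le; pose Y := X *m P^t*.
have YC : Y^t* = P *m X^t* by rewrite trmx_mul map_mxM trmxCK.
have invP : invmx P = P^t* by rewrite invmx_unitary ?spectral_unitarymx.
have -> : X *m A *m X^t* = Y *m diag_mx d *m Y^t*.
  by rewrite YC [X in _ *m X *m _](orthomx_spectralP A_normal) invP !mulmxA.
have -> : X *m X^t* = Y *m Y^t*.
  by rewrite YC -mulmxA (mulmxA _ P) -invP mulVmx ?spectral_unit ?mul1mx.
rewrite mul_mx_diag !mxE mulr_sumr; apply: ler_sum => j _; rewrite !mxE.
rewrite mulrAC [_ * (_ * _)]mulrC ler_wpM2l // -normCK exprn_ge0 //.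
Qed.

End NormalForm.

Section RealSymmetric.
Local Open Scope sesquilinear_scope.

Lemma symmetric_form_le (R : realType) n (A : 'M[R]_n) (mu : R) (x : 'rV_n) :
  A^T = A -> (forall a, eigenvalue A a -> a <= mu) ->
  (x *m A *m x^T) 0 0 <= mu * (x *m x^T) 0 0.
Proof.
move=> A_sym A_le; pose f := real_complex R; pose AC := map_mx f A.
have AC_herm : AC \is hermsymmx.
  apply/is_hermitianmxP; rewrite expr0 scale1r.
  apply/matrixP => i j; rewrite !mxE -{1}A_sym mxE.
  by rewrite -[RHS]/(conjc _) conjc_real.
have d_real := hermitian_spectral_diag_real AC_herm.
have d_le j : spectral_diag AC 0 j <= f mu.
  have d_ev := spectral_diag_eigenvalue (hermitian_normalmx AC_herm) j.
  rewrite -(RRe_real (mxOverP d_real 0 j)) lecR; apply: A_le.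
  rewrite eigenvalue_root_char -(fmorph_root f) map_char_poly -eigenvalue_root_char.
  by move: d_ev; rewrite -{1}(RRe_real (mxOverP d_real 0 j)).
have xC : (map_mx f x)^t* = (map_mx f x)^T.
  by apply/matrixP => i j; rewrite !mxE -[LHS]/(conjc _) conjc_real.
have := normalmx_form_le (hermitian_normalmx AC_herm) (map_mx f x) d_le.
by rewrite xC map_trmx -!map_mxM !mxE -rmorphM lecR.
Qed.

End RealSymmetric.

Lemma delta_sub_form (R : pzRingType) n (M : 'M[R]_n) u w :
  let x := delta_mx 0 u - delta_mx 0 w : 'rV_n in
  (x *m M *m x^T) 0 0 = M u u - M u w - M w u + M w w.
Proof.
have entry a b : ((delta_mx 0 a : 'rV_n) *m M *m (delta_mx 0 b : 'rV_n)^T) 0 0 = M a b.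
  by rewrite trmx_delta -rowE -colE !mxE.
have subE (A B : 'M[R]_1) : (A - B) 0 0 = A 0 0 - B 0 0 by rewrite !mxE.
rewrite /= linearB /= !mulmxBl !mulmxBr !subE !entry.
by rewrite opprB addrA addrAC.
Qed.

Lemma ceil_half_le (R : archiRealFieldType) (k m : nat) :
  (k <= 2 * m)%N -> Num.ceil (k%:R / 2 : R) <= m%:Z.
Proof.
rewrite ceil_le_int -pmulrn -(ler_nat R) natrM => k_le; lra.
Qed.

Section Laplacian.
Variables (R : realType) (n : nat) (e : rel 'I_n).
Hypothesis e_simple : simple_graph e.
Local Notation L := (laplacian R e).

Lemma card_nbhd_in S v : #|nbhd_in e S v| = (\sum_(u in S) e u v)%N.
Proof.
rewrite -sum1_card [LHS]big_mkcond [RHS]big_mkcond /=.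
by apply: eq_bigr => u _; rewrite !inE; case: (u \in S); case: (e u v).
Qed.

Lemma deg_sum v : deg e v = (\sum_u e u v)%N.
Proof.
rewrite /deg -sum1_card big_mkcond /=.
by apply: eq_bigr => u _; rewrite inE; case: (e u v).
Qed.

Lemma card_nbhd_inC S v : (#|nbhd_in e S v| + #|nbhd_in e (~: S) v|)%N = deg e v.
Proof.
rewrite /deg -(cardsID S [set u | e u v]).
by congr (_ + _)%N; apply: eq_card => u; rewrite !inE andbC.
Qed.

Lemma laplacianE i j : L i j = (deg e i)%:R *+ (i == j) - (e i j)%:R.
Proof.
have [_ e_irr] := e_simple.
rewrite mxE; case: eqP => [->|_]; first by rewrite e_irr subr0.
by case: (e i j); rewrite mulr0n sub0r ?mulr1n ?oppr0.
Qed.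

Lemma laplacian_sym : L^T = L.
Proof.
have [e_sym _] := e_simple.
by apply/matrixP => i j; rewrite mxE !laplacianE e_sym eq_sym; case: eqP => [->|].
Qed.

Lemma laplacian_form (x : 'rV[R]_n) :
  (x *m L *m x^T) 0 0 = \sum_j \sum_i (e i j)%:R * (x 0 j * (x 0 j - x 0 i)).
Proof.
rewrite mxE; apply: eq_bigr => j _; rewrite !mxE mulr_suml.
under eq_bigr => i _ do rewrite laplacianE mulrBr mulrBl.
rewrite sumrB (bigD1 j) //= eqxx mulr1n big1 => [|i /negPf ->]; last first.
  by rewrite mulr0n mulr0 mul0r.
rewrite addr0 deg_sum natr_sum mulr_sumr mulr_suml -sumrB.
by apply: eq_bigr => i _; ring.
Qed.

Definition cut_size (S : {set 'I_n}) : nat := \sum_(v in ~: S) #|nbhd_in e S v|.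

Lemma cut_sizeC S : cut_size (~: S) = cut_size S.
Proof.
have [e_sym _] := e_simple.
rewrite /cut_size setCK; under eq_bigr do rewrite card_nbhd_in.
under [RHS]eq_bigr do rewrite card_nbhd_in.
by rewrite exchange_big; apply: eq_bigr => u _; apply: eq_bigr => v _; rewrite e_sym.
Qed.

Lemma laplacian_form_two_valued (S : {set 'I_n}) (a b : R) :
  let x := \row_i (if i \in S then a else b) in
  (x *m L *m x^T) 0 0 = (a - b) ^+ 2 * (cut_size S)%:R.
Proof.
move=> x; have side (T : {set 'I_n}) c d j :
    (forall i, x 0 i = if i \in T then c else d) -> j \in T ->
    \sum_i (e i j)%:R * (x 0 j * (x 0 j - x 0 i)) =
      c * (c - d) * #|nbhd_in e (~: T) j|%:R.
  move=> xE jT; rewrite card_nbhd_in natr_sum mulr_sumr [RHS]big_mkcond /=.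
  by apply: eq_bigr => i _; rewrite !xE jT inE; case: (i \in T); rewrite /= ?subrr; ring.
have xS i : x 0 i = if i \in S then a else b by rewrite mxE.
have xCS i : x 0 i = if i \in ~: S then b else a by rewrite xS inE; case: (i \in S).
rewrite laplacian_form (bigID (mem S)) /= (eq_bigr _ (fun j => side _ _ _ j xS)).
rewrite [X in _ + X](eq_bigr _ (fun j jS => side _ _ _ j xCS (etrans (in_setC j S) jS))).
have cutS : \sum_(j in S) #|nbhd_in e (~: S) j|%:R = (cut_size S)%:R :> R.
  by rewrite -cut_sizeC /cut_size setCK natr_sum.
have cutCS : \sum_(j | j \notin S) #|nbhd_in e (~: ~: S) j|%:R = (cut_size S)%:R :> R.
  by rewrite setCK natr_sum; apply: eq_bigl => j; rewrite inE.
by rewrite -!mulr_sumr cutS cutCS; ring.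
Qed.

Lemma sqnorm_two_valued (S : {set 'I_n}) (a b : R) :
  let x := \row_i (if i \in S then a else b) in
  (x *m x^T) 0 0 = #|S|%:R * a ^+ 2 + #|~: S|%:R * b ^+ 2.
Proof.
move=> x; rewrite mxE; under eq_bigr => j _ do rewrite !mxE -expr2.
rewrite (bigID (mem S)) /= (eq_bigr (fun _ => a ^+ 2)) => [|j jS]; last by rewrite ifT.
rewrite [X in _ + X](eq_bigr (fun _ => b ^+ 2)) => [|j jS]; last by rewrite ifN.
have -> : \sum_(i < n | i \notin S) b ^+ 2 = \sum_(i in ~: S) b ^+ 2.
  by apply: eq_bigl => j; rewrite inE.
by rewrite !sumr_const !mulr_natl.
Qed.

Variable mu : R.
Hypotheses (n_gt0 : (0 < n)%N) (mu_spec : lap_spectral_radius e mu).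

Lemma spectral_cut_bound S : n%:R * (cut_size S)%:R <= mu * (#|S|%:R * #|~: S|%:R).
Proof.
have [_ mu_max] := mu_spec.
set s : R := #|S|%:R; set t : R := #|~: S|%:R.
have st : s + t = n%:R by rewrite -natrD cardsC card_ord.
have := symmetric_form_le (\row_i (if i \in S then t else - s)) laplacian_sym mu_max.
rewrite laplacian_form_two_valued sqnorm_two_valued -/s -/t.
have -> : (t - - s) ^+ 2 = n%:R * n%:R by rewrite -st; ring.
have -> : s * t ^+ 2 + t * (- s) ^+ 2 = n%:R * (s * t) by rewrite -st; ring.
by rewrite mulrCA -mulrA ler_pM2l ?ltr0n.
Qed.

Lemma min_deg_le_deg v : (min_deg e <= deg e v)%N.
Proof. by rewrite /min_deg -minEnat; exact: (@bigmin_le _ nat 'I_n n). Qed.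

Lemma min_deg_succ_le_spectral_radius : 0 < mu -> (min_deg e)%:R + 1 <= mu.
Proof.
(* An edge uw gives the test vector e_u - e_w, of Rayleigh quotient
   (deg u + deg w + 2) / 2; without edges L = 0, so its only eigenvalue is 0. *)
move=> mu_gt0; have [mu_ev mu_max] := mu_spec; have [e_sym e_irr] := e_simple.
have [[u w] /= e_uw | no_edge] := pickP (fun p : 'I_n * 'I_n => e p.1 p.2).
  have w_neq_u : (w == u) = false by apply: contraTF e_uw => /eqP ->; rewrite e_irr.
  pose x : 'rV[R]_n := delta_mx 0 u - delta_mx 0 w.
  have xLx : (x *m L *m x^T) 0 0 = (deg e u)%:R + (deg e w)%:R + 2.
    rewrite delta_sub_form !laplacianE !eqxx w_neq_u eq_sym w_neq_u.
    rewrite (e_sym w u) e_uw !e_irr.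
    by rewrite !mulr1n !mulr0n; ring.
  have xx : (x *m x^T) 0 0 = 2.
    rewrite -[x in x *m _]mulmx1 delta_sub_form !mxE !eqxx w_neq_u eq_sym w_neq_u.
    by rewrite !mulr1n !mulr0n !subr0.
  have := symmetric_form_le x laplacian_sym mu_max; rewrite xLx xx.
  have := min_deg_le_deg u; have := min_deg_le_deg w; rewrite -!(ler_nat R); lra.
have L0 : L = 0.
  apply/matrixP => i j; rewrite laplacianE deg_sum big1 ?(no_edge (i, j)) => [|k _].
    by rewrite mxE mul0rn subr0.
  by rewrite (no_edge (k, i)).
move/eigenvalueP: mu_ev => [v]; rewrite L0 mulmx0 => /esym /eqP.
by rewrite scaler_eq0 (gt_eqF mu_gt0) /= => /eqP v0; rewrite v0 eqxx.
Qed.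

Definition k_dominating (k : int) (S : {set 'I_n}) : Prop :=
  forall v, v \notin S -> k <= #|nbhd_in e S v|%:Z.

Lemma k_dominating_card_bound S k : 0 <= k -> k <= (min_deg e).+1%:Z ->
  k_dominating k S -> Num.ceil (n%:R / mu * k%:~R) <= #|S|%:Z.
Proof.
move=> k_ge0 k_le S_dom; rewrite ceil_le_int -pmulrn.
have k_ge0R : 0 <= k%:~R :> R by rewrite ler0z.
(* For mu <= 0 (including the junk value n / 0 = 0) the bound is nonpositive. *)
have [mu_le0 | mu_gt0] := lerP mu 0.
  apply: (@le_trans _ _ 0); last exact: ler0n.
  by rewrite mulr_le0_ge0 // mulr_ge0_le0 ?ler0n // invr_le0.
have k_le_mu : k%:~R <= mu.
  apply: le_trans (min_deg_succ_le_spectral_radius mu_gt0).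
  by rewrite -(ler_int R) -pmulrn -natr1 in k_le.
rewrite mulrAC ler_pdivrMr //; set s : R := #|S|%:R; set t : R := #|~: S|%:R.
have st : s + t = n%:R by rewrite -natrD cardsC card_ord.
have cut_ge : t * k%:~R <= (cut_size S)%:R.
  rewrite /cut_size natr_sum mulr_natl -sumr_const.
  apply: ler_sum => v; rewrite inE => /S_dom.
  by rewrite -(ler_int R) -pmulrn.
have [t0 | t_neq0] := eqVneq t 0.
  by rewrite -st t0 addr0; apply: ler_wpM2l; rewrite ?ler0n.
have t_gt0 : 0 < t by rewrite lt_def t_neq0 ler0n.
rewrite -(ler_pM2l t_gt0) (_ : t * (s * mu) = mu * (s * t)); last by ring.
by apply: le_trans (spectral_cut_bound S); rewrite mulrCA ler_wpM2l ?ler0n.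
Qed.

Lemma k_dominating_bigmin (P : pred {set 'I_n}) k : 0 <= k -> k <= (min_deg e).+1%:Z ->
  (forall S, P S -> k_dominating k S) ->
  Num.ceil (n%:R / mu * k%:~R) <= (\big[minn/n]_(S | P S) #|S|)%:Z.
Proof.
move=> k_ge0 k_le P_dom.
apply: (big_ind (fun m : nat => Num.ceil (n%:R / mu * k%:~R) <= m%:Z)).
- rewrite -[n in n%:Z](card_ord n) -cardsT.
  by apply: k_dominating_card_bound => // v; rewrite inE.
- by move=> a b; rewrite /minn; case: ifP.
- by move=> S /P_dom; apply: k_dominating_card_bound.
Qed.

Lemma offensive_alliance_k_dominating S : global_offensive_alliance e S ->
  k_dominating (Num.ceil (((min_deg e)%:R + 1) / 2 : R)) S.
Proof.
case/andP => _ /forallP S_all v vS; have := S_all v; rewrite inE vS /= => v_att.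
rewrite natr1; apply: ceil_half_le.
have := min_deg_le_deg v; rewrite -(card_nbhd_inC S v); move: v_att.
by set a := #|nbhd_in e S v|; set b := #|nbhd_in e (~: S) v|; lia.
Qed.

Lemma strong_offensive_alliance_k_dominating S : global_strong_offensive_alliance e S ->
  k_dominating (Num.ceil ((min_deg e)%:R / 2 : R) + 1) S.
Proof.
case/andP => _ /forallP S_all v vS; have := S_all v; rewrite inE vS /= => v_att.
have := min_deg_le_deg v; rewrite -(card_nbhd_inC S v); move: v_att.
set a := #|nbhd_in e S v|; set b := #|nbhd_in e (~: S) v| => v_att d_le.
have a_gt0 : (0 < a)%N by lia.
rewrite -(prednK a_gt0) intS addrC lerD2l; apply: ceil_half_le; lia.
Qed.

End Laplacian.

Theorem theorem6 (R : realType) (n : nat) (e : rel 'I_n) (mu : R) :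
  (0 < n)%N -> simple_graph e -> lap_spectral_radius e mu ->
  ((goa_number e)%:~R : int) >=
    Num.ceil ((n%:R / mu) * (Num.ceil (((min_deg e)%:R + 1) / 2 : R))%:~R)
  /\
  ((gsoa_number e)%:~R : int) >=
    Num.ceil ((n%:R / mu) * ((Num.ceil ((min_deg e)%:R / 2 : R))%:~R + 1)).
Proof.
move=> n_gt0 e_simple mu_spec; have d_ge0 := ler0n R (min_deg e).
have half_ge0 (x : R) : 0 <= x -> 0 <= Num.ceil (x / 2).
  by move=> x_ge0; rewrite ceil_ge0; lra.
have k1_ge0 : 0 <= Num.ceil (((min_deg e)%:R + 1) / 2 : R) by apply: half_ge0; lra.
have k1_le : Num.ceil (((min_deg e)%:R + 1) / 2 : R) <= (min_deg e).+1%:Z.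
  by rewrite natr1 ceil_half_le ?leq_pmull.
have k2_ge0 : 0 <= Num.ceil ((min_deg e)%:R / 2 : R) + 1 by rewrite addr_ge0 ?half_ge0.
have k2_le : Num.ceil ((min_deg e)%:R / 2 : R) + 1 <= (min_deg e).+1%:Z.
  by rewrite intS addrC lerD2l ceil_half_le ?leq_pmull.
have dom_bound := k_dominating_bigmin e_simple n_gt0 mu_spec.
split; rewrite intz.
- apply: dom_bound k1_ge0 k1_le _; exact: offensive_alliance_k_dominating.
- rewrite -[_%:~R + 1]/(_ + 1%:~R) -intrD.
  apply: dom_bound k2_ge0 k2_le _; exact: strong_offensive_alliance_k_dominating.
Qed.
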